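(* Let $n\in\mathbb N$, let $a_1,\dots,a_4,b_1,\dots,b_4$ be nonnegative integers with $a_1+\dots+a_4=b_1+\dots+b_4$, and let $\sigma_1,\dots,\sigma_4$ be the four distinct cyclic permutations of $(1,2,3,4)$. Identify $$\mathbb C^{(a_1+\cdots+a_4)n}\otimes\mathbb C^{(b_1+\cdots+b_4)n}\equiv\Big(\bigoplus_{j,k=1}^4\mathbb C^{a_j}\otimes\mathbb C^{b_k}\Big)\otimes(\mathbb C^n\otimes\mathbb C^n).$$ Then the largest eigenvalue of $$\frac{n}{2n-1}\sum_{i=1}^4\Big(\bigoplus_{j=1}^4 I_{a_j}\otimes\mathfrak P^{(n)}_{\sigma_j(i)}\Big)\otimes\Big(\bigoplus_{j=1}^4 I_{b_j}\otimes\mathfrak P^{(n)}_{\sigma_j(i)}\Big)$$ is $1$, with eigenspace $$\Big\{\big(|\mathrm{aux}_1\rangle\oplus|\mathrm{aux}_2\rangle\oplus|\mathrm{aux}_3\rangle\oplus|\mathrm{aux}_4\rangle\big)\otimes|\phi_n\rangle:\ |\mathrm{aux}_j\rangle\in\mathbb C^{a_j}\otimes\mathbb C^{b_j}\Big\}.$$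
   Context: $|\phi_n\rangle=\frac1{\sqrt n}\sum_{i=1}^n|i\rangle|i\rangle\in\mathbb C^n\otimes\mathbb C^n$. For $n\in\mathbb N$, $\mathfrak P^{(n)}_1,\dots,\mathfrak P^{(n)}_4\in M_n(\mathbb R)$ denote orthogonal projections (real symmetric idempotent matrices) such that (i) $\mathfrak P^{(n)}_1+\dots+\mathfrak P^{(n)}_4=(2-\frac1n)I_n$; (ii) $\operatorname{rk}\mathfrak P^{(n)}_1=\lfloor\frac n2\rfloor-(-1)^n$ and $\operatorname{rk}\mathfrak P^{(n)}_i=\lfloor\frac n2\rfloor$ for $i=2,3,4$; (iii) the only subspaces of $\mathbb C^n$ invariant under all four matrices are $0$ and $\mathbb C^n$. Such quadruples exist for every $n$, and any two of them are simultaneously unitarily equivalent; moreover, any quadruple of orthogonal projections on a Hilbert space summing to $(2-\frac1n)I$ with no nontrivial common invariant closed subspace is unitarily equivalent to one of the four cyclic shifts $(\mathfrak P^{(n)}_{\sigma(1)},\dots,\mathfrak P^{(n)}_{\sigma(4)})$, $\sigma$ a power of the cycle $(1\,2\,3\,4)$, and these four are pairwise inequivalent. *)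

From HB Require Import structures.
From mathcomp Require Import all_boot all_order all_algebra.
Set Implicit Arguments. Unset Strict Implicit. Unset Printing Implicit Defensive.
Import Order.TTheory GRing.Theory Num.Theory.
Local Open Scope ring_scope.

(* Index set of  (+)_{j=1}^4 C^{a_j} (x) C^n  ==  C^{(a_1+..+a_4) n}:
   triples (j, x, p) with j : 'I_4, x : 'I_(a j), p : 'I_n.                  *)
Notation blk a n := {j : 'I_4 & ('I_(a j) * 'I_n)%type}.

(* Entry (u,v) of  (+)_{j} I_{a_j} (x) P_{sigma_j(i)},
   where sigma_j(i) = i + s j  (mod 4) is the j-th cyclic permutation. *)
Definition blkP (C : numClosedFieldType) (n : nat) (P : 'I_4 -> 'M[C]_n)
    (s : 'I_4 -> 'I_4) (a : 'I_4 -> nat) (i : 'I_4) (u v : blk a n) : C :=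
  ((tag u == tag v) && ((tagged u).1 == (tagged v).1 :> nat))%:R *
  P (i + s (tag u)) (tagged u).2 (tagged v).2.

(* Entry (u,v) of  n/(2n-1) \sum_i (.. a ..) (x) (.. b ..)  on the index set
   blk a n * blk b n  (a basis of C^{(sum a) n} (x) C^{(sum b) n}). *)
Definition opE (C : numClosedFieldType) (n : nat) (P : 'I_4 -> 'M[C]_n)
    (s : 'I_4 -> 'I_4) (a b : 'I_4 -> nat) (u v : blk a n * blk b n) : C :=
  (n%:R / (2 * n%:R - 1)) *
  \sum_(i < 4) blkP P s i u.1 v.1 * blkP P s i u.2 v.2.

Definition opmx (C : numClosedFieldType) (n : nat) (P : 'I_4 -> 'M[C]_n)
    (s : 'I_4 -> 'I_4) (a b : 'I_4 -> nat) :
    'M[C]_#|{: blk a n * blk b n}| :=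
  \matrix_(r, c) opE P s (enum_val r) (enum_val c).

(* Coordinates of  (aux_1 (+) .. (+) aux_4) (x) |phi_n>,
   |phi_n> = n^{-1/2} \sum_p |p>|p>, aux_j in C^{a_j} (x) C^{b_j}. *)
Definition auxphi (C : numClosedFieldType) (n : nat) (a b : 'I_4 -> nat)
    (aux : forall j : 'I_4, 'M[C]_(a j, b j)) (w : blk a n * blk b n) : C :=
  \sum_(j < 4) \sum_(x < a j) \sum_(y < b j) \sum_(p < n)
     (aux j x y / sqrtC n%:R) *
     (w == (Tagged (fun k => ('I_(a k) * 'I_n)%type) (x, p),
            Tagged (fun k => ('I_(b k) * 'I_n)%type) (y, p)))%:R.

From HB Require Import structures.
From mathcomp Require Import all_boot all_order all_algebra.
From mathcomp Require Import ring zify.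
Set Implicit Arguments. Unset Strict Implicit. Unset Printing Implicit Defensive.
Import Order.TTheory GRing.Theory Num.Theory Num.Def.
Local Open Scope ring_scope.

(* Write lam = 2 - 1/n, so that every cyclic shift i |-> P (i + s j) of the
   projection family sums to lam * I.  A vector v of C^{(sum a) n} (x)
   C^{(sum b) n} is cut into n x n coefficient blocks X = X_{(j,x),(k,y)};
   v is an l-eigenvector of the operator iff every block satisfies
       sum_i P_{i+s j} X P_{i+s k} = (l * lam) X.                    (E)
   The key identity, for projections A_i, B_i summing to lam * I and X as in
   (E) with eigenvalue mu, is
       sum_i ||A_i X - X B_i||^2 = 2 (lam - mu) ||X||^2   (Hilbert-Schmidt),
   which gives mu <= lam, i.e. l <= 1, and for l = 1 forces every block to
   intertwine the two shifted families.  Irreducibility (Schur's lemma) then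
   makes diagonal blocks (j = k) scalar, and the rank condition (ii) (the
   rank of P 0 differs from that of the other P i) kills off-diagonal blocks:
   an invertible intertwiner would conjugate P 0 to a projection of another
   rank.  Scalar diagonal blocks are exactly the coordinates of
   (aux_1 (+) .. (+) aux_4) (x) |phi_n>, and conversely such vectors are
   1-eigenvectors by (E), since P_i^2 = P_i. *)

Section HilbertSchmidt.
Variables (C : numClosedFieldType) (n : nat).

Definition adjmx (X : 'M[C]_n) : 'M[C]_n := (map_mx conjC X)^T.
Definition hsnorm (X : 'M[C]_n) : C := \tr (adjmx X *m X).

Lemma adjmxM (X Y : 'M[C]_n) : adjmx (X *m Y) = adjmx Y *m adjmx X.
Proof. by rewrite /adjmx map_mxM trmx_mul. Qed.

Lemma adjmxB (X Y : 'M[C]_n) : adjmx (X - Y) = adjmx X - adjmx Y.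
Proof. by rewrite /adjmx map_mxB linearB. Qed.

Lemma adjmx_real_sym (Q : 'M[C]_n) :
  (forall p q, Q p q \is Num.real) -> Q^T = Q -> adjmx Q = Q.
Proof.
move=> Qreal Qsym; rewrite /adjmx -[RHS]Qsym; congr (_^T).
by apply/matrixP => p q; rewrite mxE conj_Creal.
Qed.

Lemma hsnormE (X : 'M[C]_n) : hsnorm X = \sum_i \sum_k `|X k i| ^+ 2.
Proof.
rewrite /hsnorm /mxtrace; apply: eq_bigr => i _; rewrite mxE.
by apply: eq_bigr => k _; rewrite !mxE normCK mulrC.
Qed.

Lemma hsnorm_ge0 (X : 'M[C]_n) : 0 <= hsnorm X.
Proof.
by rewrite hsnormE; apply: sumr_ge0 => i _; apply: sumr_ge0 => k _; apply: exprn_ge0.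
Qed.

Lemma hsnorm_eq0 (X : 'M[C]_n) : hsnorm X = 0 -> X = 0.
Proof.
rewrite hsnormE => /psumr_eq0P col0; apply/matrixP => k i; rewrite mxE.
have /psumr_eq0P entry0 : \sum_k `|X k i| ^+ 2 = 0.
  by apply: col0 => // j _; apply: sumr_ge0 => l _; apply: exprn_ge0.
have /eqP : `|X k i| ^+ 2 = 0 by apply: entry0 => // j _; apply: exprn_ge0.
by rewrite sqrf_eq0 normr_eq0 => /eqP.
Qed.

Lemma hsnorm_gt0 (X : 'M[C]_n) : X != 0 -> 0 < hsnorm X.
Proof.
move=> X0; rewrite lt_def hsnorm_ge0 andbT.
by apply: contra X0 => /eqP /hsnorm_eq0 ->.
Qed.

End HilbertSchmidt.

Section Intertwining.
Variables (C : numClosedFieldType) (n : nat) (I : finType).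

Lemma hsnorm_commutator (A B X : 'M[C]_n) :
  adjmx A = A -> adjmx B = B -> A *m A = A -> B *m B = B ->
  hsnorm (A *m X - X *m B) =
    \tr (adjmx X *m A *m X) + \tr (adjmx X *m X *m B)
    - 2 * \tr (adjmx X *m (A *m X *m B)).
Proof.
move=> Aadj Badj Aid Bid.
rewrite /hsnorm adjmxB !adjmxM Aadj Badj mulmxBl !mulmxBr !linearB /=.
have -> : \tr (adjmx X *m A *m (A *m X)) = \tr (adjmx X *m A *m X).
  by rewrite -mulmxA (mulmxA A) Aid mulmxA.
have -> : \tr (adjmx X *m A *m (X *m B)) = \tr (adjmx X *m (A *m X *m B)).
  by rewrite !mulmxA.
have -> : \tr (B *m adjmx X *m (A *m X)) = \tr (adjmx X *m (A *m X *m B)).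
  by rewrite -!mulmxA mxtrace_mulC !mulmxA.
have -> : \tr (B *m adjmx X *m (X *m B)) = \tr (adjmx X *m X *m B).
  by rewrite -!mulmxA mxtrace_mulC !mulmxA -(mulmxA _ B B) Bid.
ring.
Qed.

Lemma intertwining_defect (A B : I -> 'M[C]_n) (lam mu : C) (X : 'M[C]_n) :
  (forall i, adjmx (A i) = A i) -> (forall i, adjmx (B i) = B i) ->
  (forall i, A i *m A i = A i) -> (forall i, B i *m B i = B i) ->
  \sum_i A i = lam%:M -> \sum_i B i = lam%:M ->
  \sum_i A i *m X *m B i = mu *: X ->
  \sum_i hsnorm (A i *m X - X *m B i) = 2 * (lam - mu) * hsnorm X.
Proof.
move=> Aadj Badj Aid Bid sumA sumB eigX.
have sumAX : \sum_i \tr (adjmx X *m A i *m X) = lam * hsnorm X.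
  by rewrite -linear_sum /= -mulmx_suml -mulmx_sumr sumA mul_mx_scalar -scalemxAl mxtraceZ.
have sumXB : \sum_i \tr (adjmx X *m X *m B i) = lam * hsnorm X.
  by rewrite -linear_sum /= -mulmx_sumr sumB mul_mx_scalar mxtraceZ.
have sumAXB : \sum_i \tr (adjmx X *m (A i *m X *m B i)) = mu * hsnorm X.
  by rewrite -linear_sum /= -mulmx_sumr eigX -scalemxAr mxtraceZ.
rewrite (eq_bigr _ (fun i _ => hsnorm_commutator X (Aadj i) (Badj i) (Aid i) (Bid i))).
by rewrite !big_split /= sumrN -mulr_sumr sumAX sumXB sumAXB; ring.
Qed.

(* Schur's lemma: over an algebraically closed field, a matrix commuting with
   an irreducible family is scalar (its eigenspace is a nonzero invariant
   subspace, hence everything). *)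
Lemma commutant_scalar (Q : I -> 'M[C]_n) (Y : 'M[C]_n) : (0 < n)%N ->
  (forall U : 'M[C]_n, (forall i, stablemx U (Q i)) -> (U == 0) || row_full U) ->
  (forall i, Q i *m Y = Y *m Q i) -> exists mu, Y = mu%:M.
Proof.
move=> n_gt0 irr YQ.
have [mu mu_root] : exists mu, root (char_poly Y) mu.
  by apply/closed_rootP; rewrite size_char_poly; case: n n_gt0.
exists mu.
have mu_eig : eigenvalue Y mu by rewrite eigenvalue_root_char.
have stable : forall i, stablemx (eigenspace Y mu) (Q i).
  move=> i; apply/sub_kermxP.
  by rewrite -mulmxA mulmxBr YQ scalar_mxC -mulmxBl mulmxA mulmx_ker mul0mx.
move: (irr _ stable) mu_eig; rewrite /eigenvalue => /orP[-> //|].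
rewrite /row_full /eigenspace mxrank_ker => /eqP full _.
have rk0 : \rank (Y - mu%:M) = 0%N.
  by move: full (rank_leq_row (Y - mu%:M)); case: (\rank _) => // r; lia.
by apply/eqP; rewrite -subr_eq0 -mxrank_eq0 rk0.
Qed.

End Intertwining.

Section ShiftedIntertwiner.
Variables (C : numClosedFieldType) (n m : nat) (Q : 'I_m.+1 -> 'M[C]_n).
Hypothesis n_gt0 : (0 < n)%N.
Hypothesis Q_adj : forall i, adjmx (Q i) = Q i.
Hypothesis Q_irr : forall U : 'M[C]_n,
  (forall i, stablemx U (Q i)) -> (U == 0) || row_full U.

Lemma intertwiner_gram_commutes (t t' : 'I_m.+1) (X : 'M[C]_n) :
  (forall i, Q (i + t) *m X = X *m Q (i + t')) ->
  forall i, Q i *m (adjmx X *m X) = adjmx X *m X *m Q i.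
Proof.
move=> XQ i; have := XQ (i - t'); rewrite subrK => shifted.
have := congr1 (@adjmx C n) shifted; rewrite !adjmxM !Q_adj => shifted_adj.
by rewrite mulmxA -shifted_adj -!mulmxA shifted.
Qed.

Lemma intertwiner_zero_or_unit (t t' : 'I_m.+1) (X : 'M[C]_n) :
  (forall i, Q (i + t) *m X = X *m Q (i + t')) -> X = 0 \/ X \in unitmx.
Proof.
move=> XQ; have [nu gram] := commutant_scalar n_gt0 Q_irr (intertwiner_gram_commutes XQ).
have [nu0|nu_neq0] := eqVneq nu 0.
  by left; apply: hsnorm_eq0; rewrite /hsnorm gram nu0 mxtrace_scalar mul0rn.
right; rewrite unitmxE unitfE; apply: contra nu_neq0 => /eqP det0.
have := congr1 determinant gram; rewrite det_mulmx det0 mulr0 det_scalar.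
by move/esym/eqP; rewrite expf_eq0 => /andP[].
Qed.

(* An invertible intertwiner of two shifts equates the rank of Q 0 with the
   rank of Q (t' - t); so if Q 0 has a rank of its own, intertwiners between
   distinct shifts vanish. *)
Lemma intertwiner_shift_zero (t t' : 'I_m.+1) (X : 'M[C]_n) :
  (forall i : 'I_m.+1, i != 0 -> \rank (Q i) != \rank (Q 0)) -> t != t' ->
  (forall i, Q (i + t) *m X = X *m Q (i + t')) -> X = 0.
Proof.
move=> rkQ tt' XQ; case: (intertwiner_zero_or_unit XQ) => // Xunit.
have := XQ (- t); rewrite addNr => conj0.
have rk_left : \rank (Q 0 *m X) = \rank (Q 0) by rewrite mxrankMfree // row_free_unit.
have rk_right : \rank (X *m Q (- t + t')) = \rank (Q (- t + t')).
  by rewrite (eqmxMfull _ (_ : row_full X)) // row_full_unit.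
have shift_neq0 : - t + t' != 0 by rewrite addrC subr_eq0 eq_sym.
by move: (rkQ _ shift_neq0); rewrite -rk_right -conj0 rk_left eqxx.
Qed.

End ShiftedIntertwiner.

Section BlockDecomposition.
Variables (C : numClosedFieldType) (n : nat) (P : 'I_4 -> 'M[C]_n).
Variables (s : 'I_4 -> 'I_4) (a b : 'I_4 -> nat).
Hypothesis P_sym : forall i, (P i)^T = P i.

Let P_symE i p q : P i q p = P i p q.
Proof. by rewrite -{1}P_sym mxE. Qed.

Definition blk_idx (c : 'I_4 -> nat) (j : 'I_4) (x : 'I_(c j)) (p : 'I_n) : blk c n :=
  Tagged (fun k => ('I_(c k) * 'I_n)%type) (x, p).

Lemma blk_idx_eq (c : 'I_4 -> nat) j (x : 'I_(c j)) p j' (x' : 'I_(c j')) p' :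
  (blk_idx x p == blk_idx x' p') = [&& j == j', (x == x' :> nat) & p == p'].
Proof.
have [eq_j|neq] /= := eqVneq j j'; first by subst j'; rewrite /blk_idx eq_Tagged /= xpair_eqE.
by apply/negbTE/eqP => /(congr1 tag) /= eq_jj'; rewrite eq_jj' eqxx in neq.
Qed.

Lemma blkP_sum (c : 'I_4 -> nat) i j (x : 'I_(c j)) p (g : blk c n -> C) :
  \sum_u blkP P s i (blk_idx x p) u * g u = \sum_p' P (i + s j) p p' * g (blk_idx x p').
Proof.
pose inblock := [set blk_idx x p' | p' in [set: 'I_n]].
rewrite (bigID (mem inblock)) /= [X in _ + X]big1 ?addr0; last first.
  move=> [j' [x' p']] /= out; rewrite /blkP /=.
  have [eq_j|_] := eqVneq j j'; last by rewrite /= !mul0r.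
  move: x' p' out; rewrite -eq_j => x' p' out.
  have [eq_x|_] := eqVneq (x : nat) x'; last by rewrite /= !mul0r.
  have {}eq_x : x = x' by apply: val_inj.
  by exfalso; move/negP: out; apply; apply/imsetP; exists p'; rewrite ?inE // eq_x.
rewrite big_imset /=; last by move=> p1 p2 _ _ /eqP; rewrite blk_idx_eq !eqxx => /eqP.
by apply: eq_big => [p'|p' _]; rewrite ?inE // /blkP /= !eqxx mul1r.
Qed.

Definition coef_block (f : blk a n * blk b n -> C) j (x : 'I_(a j)) k (y : 'I_(b k)) :
    'M[C]_n :=
  \matrix_(p, q) f (blk_idx x p, blk_idx y q).

Definition scale_n : C := n%:R / (2 * n%:R - 1).

Lemma opE_block (f : blk a n * blk b n -> C) j (x : 'I_(a j)) k (y : 'I_(b k)) p q :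
  \sum_u f u * opE P s (blk_idx x p, blk_idx y q) u
  = (scale_n *: \sum_i (P (i + s j) *m coef_block f x y *m P (i + s k))) p q.
Proof.
have pair_sum : forall i, \sum_(u : blk a n * blk b n)
      f u * (blkP P s i (blk_idx x p) u.1 * blkP P s i (blk_idx y q) u.2)
    = \sum_p' P (i + s j) p p' * \sum_q' P (i + s k) q q' * f (blk_idx x p', blk_idx y q').
  move=> i; rewrite -(blkP_sum i x p (fun u1 => \sum_q' P (i + s k) q q' * f (u1, blk_idx y q'))).
  under [RHS]eq_bigr => u1 _ do rewrite -(blkP_sum i y q (fun u2 => f (u1, u2))) mulr_sumr.
  by rewrite pair_bigA /=; apply: eq_bigr => -[u1 u2] _ /=; ring.
rewrite /opE /scale_n mxE summxE.
under eq_bigr => u _ do rewrite mulrCA mulr_sumr.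
rewrite -mulr_sumr exchange_big /=; congr (_ * _); apply: eq_bigr => i _.
rewrite pair_sum !mxE; under [RHS]eq_bigr => q' _ do rewrite mxE mulr_suml.
rewrite exchange_big /=; apply: eq_bigr => p' _; rewrite mulr_sumr.
by apply: eq_bigr => q' _; rewrite !mxE (P_symE _ q' q); ring.
Qed.

Definition vcoord (v : 'rV[C]_#|{: blk a n * blk b n}|) (w : blk a n * blk b n) : C :=
  v 0 (enum_rank w).

Lemma opmx_coord (v : 'rV[C]_#|{: blk a n * blk b n}|) w :
  (v *m (opmx P s a b)^T) 0 (enum_rank w) = \sum_u vcoord v u * opE P s w u.
Proof.
rewrite mxE (reindex enum_rank) /=; last exact: onW_bij (enum_rank_bij _).
by apply: eq_bigr => u _; rewrite !mxE !enum_rankK.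
Qed.

Lemma opmx_eigen_blocks (v : 'rV[C]_#|{: blk a n * blk b n}|) (l : C) :
  v *m (opmx P s a b)^T = l *: v <->
  forall j (x : 'I_(a j)) k (y : 'I_(b k)),
    scale_n *: \sum_i (P (i + s j) *m coef_block (vcoord v) x y *m P (i + s k))
    = l *: coef_block (vcoord v) x y.
Proof.
split=> [eigv j x k y|blocks].
  by apply/matrixP => p q; rewrite -opE_block -opmx_coord eigv !mxE.
apply/rowP => r; rewrite -(enum_valK r); case: (enum_val r) => [[j [x p]] [k [y q]]].
rewrite -[existT _ j _]/(blk_idx x p) -[existT _ k _]/(blk_idx y q).
by rewrite opmx_coord opE_block blocks !mxE.
Qed.

End BlockDecomposition.

Section AuxPhi.
Variables (C : numClosedFieldType) (n : nat) (a b : 'I_4 -> nat).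
Variable aux : forall j : 'I_4, 'M[C]_(a j, b j).

Let auxphi_termE j (x : 'I_(a j)) (p : 'I_n) k (y : 'I_(b k)) (q : 'I_n)
    j' (x' : 'I_(a j')) (y' : 'I_(b j')) (p' : 'I_n) :
  ((blk_idx x p, blk_idx y q) == (blk_idx x' p', blk_idx y' p'))
  = (blk_idx x p == blk_idx x' p') && (blk_idx y q == blk_idx y' p').
Proof. by []. Qed.

Lemma auxphi_offdiag j (x : 'I_(a j)) k (y : 'I_(b k)) (p q : 'I_n) :
  j != k -> auxphi aux (blk_idx x p, blk_idx y q) = 0.
Proof.
move=> neq_jk; apply: big1 => j' _; apply: big1 => x' _; apply: big1 => y' _.
apply: big1 => p' _; rewrite auxphi_termE !blk_idx_eq.
have [eq_j|] /= := eqVneq j j'; last by rewrite mulr0.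
have [eq_k|] /= := eqVneq k j'; last by rewrite andbF mulr0.
by move/eqP: neq_jk; case; rewrite eq_j eq_k.
Qed.

Lemma auxphi_diag j (x : 'I_(a j)) (y : 'I_(b j)) (p q : 'I_n) :
  auxphi aux (blk_idx x p, blk_idx y q) = aux j x y / sqrtC n%:R * (p == q)%:R.
Proof.
rewrite /auxphi (bigD1 j) //= [X in _ + X]big1 ?addr0; last first.
  move=> j' neq_j; apply: big1 => x' _; apply: big1 => y' _; apply: big1 => p' _.
  by rewrite auxphi_termE !blk_idx_eq eq_sym (negPf neq_j) mulr0.
rewrite (bigD1 x) //= [X in _ + X]big1 ?addr0; last first.
  move=> x' neq_x; apply: big1 => y' _; apply: big1 => p' _.
  by rewrite auxphi_termE !blk_idx_eq eqxx /= eq_sym val_eqE (negPf neq_x) mulr0.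
rewrite (bigD1 y) //= [X in _ + X]big1 ?addr0; last first.
  move=> y' neq_y; apply: big1 => p' _.
  by rewrite auxphi_termE !blk_idx_eq !eqxx /= (eq_sym (y : nat)) val_eqE (negPf neq_y) andbF mulr0.
rewrite (bigD1 p) //= [X in _ + X]big1 ?addr0; last first.
  by move=> p' neq_p; rewrite auxphi_termE !blk_idx_eq !eqxx /= eq_sym (negPf neq_p) mulr0.
by rewrite auxphi_termE !blk_idx_eq !eqxx /= eq_sym.
Qed.

End AuxPhi.

Section EigenspaceOfOperator.
Variables (C : numClosedFieldType) (n : nat) (P : 'I_4 -> 'M[C]_n).
Variables (s : 'I_4 -> 'I_4) (a b : 'I_4 -> nat).
Hypothesis n_gt0 : (0 < n)%N.
Hypothesis P_adj : forall i, adjmx (P i) = P i.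
Hypothesis P_sym : forall i, (P i)^T = P i.
Hypothesis P_idem : forall i, P i *m P i = P i.
Hypothesis P_sum : \sum_(i < 4) P i = (2 - n%:R^-1)%:M.
Hypothesis P_irr : forall U : 'M[C]_n,
  (forall i, stablemx U (P i)) -> (U == 0) || row_full U.
Hypothesis P0_rank : forall i : 'I_4, i != 0 -> \rank (P i) != \rank (P 0).
Hypothesis s_inj : injective s.

Local Notation lam := (2 - n%:R^-1 : C).
Local Notation M := (opmx P s a b)^T.
Local Notation block v := (coef_block (vcoord v)).

Lemma scale_n_lam : scale_n C n * lam = 1.
Proof.
have n_neq0 : n%:R != 0 :> C by rewrite pnatr_eq0 -lt0n.
have den_neq0 : 2 * n%:R - 1 != 0 :> C.
  have -> : 2 * n%:R - 1 = (n + n.-1)%:R :> C.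
    apply: (addIr 1); rewrite subrK natr1 -natrM.
    by congr (_%:R); case: n n_gt0 => //= k _; lia.
  by rewrite pnatr_eq0 -lt0n addn_gt0 n_gt0.
by rewrite /scale_n; field; rewrite n_neq0 den_neq0.
Qed.

Lemma lam_gt0 : 0 < lam.
Proof.
rewrite subr_gt0 (le_lt_trans (y := 1)) ?ltr1n //.
by rewrite invf_le1 ?ltr0n ?ler1n.
Qed.

Lemma shifted_sum (t : 'I_4) : \sum_i P (i + t) = lam%:M.
Proof. by rewrite -P_sum [RHS](reindex_inj (addIr t)). Qed.

Lemma eigen_block_eq v l : v *m M = l *: v ->
  forall j (x : 'I_(a j)) k (y : 'I_(b k)),
    \sum_i (P (i + s j) *m block v x y *m P (i + s k)) = (l * lam) *: block v x y.
Proof.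
move=> /(opmx_eigen_blocks s P_sym) eigv j x k y.
have := congr1 (fun X => lam *: X) (eigv j x k y).
by rewrite !scalerA (mulrC lam) scale_n_lam scale1r mulrC.
Qed.

Lemma eigen_block_defect v l : v *m M = l *: v ->
  forall j (x : 'I_(a j)) k (y : 'I_(b k)),
    \sum_i hsnorm (P (i + s j) *m block v x y - block v x y *m P (i + s k))
    = 2 * (lam * (1 - l)) * hsnorm (block v x y).
Proof.
move=> eigv j x k y; rewrite mulrBr mulr1 [lam * l]mulrC.
by apply: intertwining_defect => //; [apply: shifted_sum | apply: shifted_sum |
  apply: eigen_block_eq].
Qed.

Lemma opmx_eigenvalue_le1 l : eigenvalue M l -> l <= 1.
Proof.
move=> /eigenvalueP[v eigv v_neq0].
have [r vr_neq0] : exists r, v 0 r != 0.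
  apply/existsP; apply: contraR v_neq0 => /existsPn v0.
  by apply/eqP/rowP => r; rewrite mxE; apply/eqP; move: (v0 r); rewrite negbK.
move: vr_neq0; rewrite -(enum_valK r); case: (enum_val r) => [[j [x p]] [k [y q]]] vr0.
have block_neq0 : block v x y != 0.
  by apply: contra vr0 => /eqP/matrixP/(_ p q); rewrite !mxE => block0; apply/eqP.
have defect_ge0 : 0 <= \sum_i hsnorm (P (i + s j) *m block v x y - block v x y *m P (i + s k)).
  by apply: sumr_ge0 => i _; apply: hsnorm_ge0.
move: defect_ge0; rewrite (eigen_block_defect eigv) pmulr_lge0 ?hsnorm_gt0 //.
by rewrite pmulr_rge0 ?ltr0n // pmulr_rge0 ?lam_gt0 // subr_ge0.
Qed.

Lemma eigen1_block_intertwines v : v *m M = v ->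
  forall j (x : 'I_(a j)) k (y : 'I_(b k)) i,
    P (i + s j) *m block v x y = block v x y *m P (i + s k).
Proof.
move=> eigv j x k y i; have eigv1 : v *m M = 1 *: v by rewrite scale1r.
have := eigen_block_defect eigv1 x y; rewrite subrr !mulr0 mul0r.
move/psumr_eq0P => defect0; apply/eqP; rewrite -subr_eq0; apply/eqP/hsnorm_eq0.
by apply: defect0 => // i' _; apply: hsnorm_ge0.
Qed.

Lemma eigen1_auxphi v : v *m M = v ->
  exists aux : forall j : 'I_4, 'M[C]_(a j, b j), v = \row_r auxphi aux (enum_val r).
Proof.
move=> eigv; pose p0 := Ordinal n_gt0.
exists (fun j => \matrix_(x, y) (block v x y p0 p0 * sqrtC n%:R)).
apply/rowP => r; rewrite mxE -[in LHS](enum_valK r).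
case: (enum_val r) => [[j [x p]] [k [y q]]].
rewrite -[existT _ j _]/(blk_idx x p) -[existT _ k _]/(blk_idx y q).
have -> : v 0 (enum_rank (blk_idx x p, blk_idx y q)) = block v x y p q by rewrite mxE.
have [eq_jk|neq_jk] := eqVneq j k.
  move: y; rewrite -eq_jk => y.
  have [mu block_mu] : exists mu, block v x y = mu%:M.
    apply: (commutant_scalar n_gt0 P_irr) => i.
    by have := eigen1_block_intertwines eigv x y (i - s j); rewrite subrK.
  have sqrt_neq0 : sqrtC (n%:R : C) != 0 by rewrite sqrtC_eq0 pnatr_eq0 -lt0n.
  rewrite auxphi_diag [in RHS]mxE block_mu !mxE eqxx mulfK //.
  by rewrite mulr_natr.
rewrite auxphi_offdiag //.
have neq_shift : s j != s k by apply: contra neq_jk => /eqP/s_inj ->.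
have -> := intertwiner_shift_zero n_gt0 P_adj P_irr P0_rank neq_shift
  (eigen1_block_intertwines eigv x y).
by rewrite mxE.
Qed.

(* Conversely, (aux_1 (+) .. (+) aux_4) (x) |phi_n> is a 1-eigenvector:
   its diagonal blocks are scalar, so (E) reduces to sum_i P_i = lam I. *)
Lemma auxphi_eigen1 (aux : forall j : 'I_4, 'M[C]_(a j, b j)) :
  (\row_r auxphi aux (enum_val r)) *m M = \row_r auxphi aux (enum_val r).
Proof.
set v := \row_r _; rewrite -[RHS]scale1r; apply/(opmx_eigen_blocks s P_sym) => j x k y.
have vcoordE u : vcoord v u = auxphi aux u by rewrite /vcoord mxE enum_rankK.
have [eq_jk|neq_jk] := eqVneq j k.
  move: y; rewrite -eq_jk => y.
  have -> : block v x y = (aux j x y / sqrtC n%:R)%:M.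
    by apply/matrixP => p q; rewrite !mxE vcoordE auxphi_diag mulr_natr.
  under eq_bigr => i _ do rewrite mul_mx_scalar -scalemxAl P_idem.
  by rewrite -scaler_sumr shifted_sum scale1r scalerA scale_scalar_mx mulrAC scale_n_lam mul1r.
have -> : block v x y = 0.
  by apply/matrixP => p q; rewrite !mxE vcoordE auxphi_offdiag.
by rewrite big1 ?scaler0 // => i _; rewrite mulmx0 mul0mx.
Qed.

End EigenspaceOfOperator.

Lemma rank_condition_distinct (C : numClosedFieldType) (n : nat) (P : 'I_4 -> 'M[C]_n) :
  ((\rank (P 0))%:Z = (n./2)%:Z - (-1) ^+ n)%R ->
  (forall i : 'I_4, i != 0 -> \rank (P i) = n./2) ->
  forall i : 'I_4, i != 0 -> \rank (P i) != \rank (P 0).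
Proof.
move=> rk0 rk i i_neq0; rewrite (rk i i_neq0); apply/eqP => rk_eq.
move: rk0; rewrite -rk_eq => /eqP; rewrite -subr_eq0 opprB addrCA subrr addr0.
by rewrite expf_eq0 /= andbF.
Qed.

Theorem proposition4p2 (C : numClosedFieldType) (n : nat) (P : 'I_4 -> 'M[C]_n)
  (s : 'I_4 -> 'I_4) (a b : 'I_4 -> nat) :
  (0 < n)%N ->
  (forall i (p q : 'I_n), P i p q \is Num.real) ->
  (forall i, (P i)^T = P i) ->
  (forall i, P i *m P i = P i) ->
  \sum_(i < 4) P i = (2 - n%:R^-1)%:M ->
  ((\rank (P 0))%:Z = (n./2)%:Z - (-1) ^+ n)%R ->
  (forall i : 'I_4, i != 0 -> \rank (P i) = n./2) ->
  (forall U : 'M[C]_n, (forall i, stablemx U (P i)) ->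
     (U == 0) || row_full U) ->
  injective s ->
  \sum_(j < 4) a j = \sum_(j < 4) b j ->
  let M := (opmx P s a b)^T in
  (forall l : C, eigenvalue M l -> l <= 1) /\
      (forall v : 'rV[C]_#|{: blk a n * blk b n}|,
         (v <= eigenspace M 1)%MS <->
         exists aux : forall j : 'I_4, 'M[C]_(a j, b j),
           v = \row_r auxphi aux (enum_val r)).
Proof.
move=> n_gt0 P_real P_sym P_idem P_sum rk0 rk P_irr s_inj _ M.
have P_adj i : adjmx (P i) = P i by apply: adjmx_real_sym.
have P0_rank := rank_condition_distinct rk0 rk.
split; first exact: opmx_eigenvalue_le1 n_gt0 P_adj P_sym P_idem P_sum.
move=> v; have eigenspace1E : (v <= eigenspace M 1)%MS = (v *m M == v).
  by rewrite /eigenspace sub_kermx mulmxBr mulmx1 subr_eq0.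
rewrite eigenspace1E; split=> [/eqP|[aux ->]].
  exact: (@eigen1_auxphi _ _ _ s a b n_gt0 P_adj P_sym P_idem P_sum P_irr P0_rank s_inj).
by apply/eqP; apply: (@auxphi_eigen1 _ _ _ s a b n_gt0 P_sym P_idem P_sum).
Qed.
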